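(* Let $d>0$ and let $p\in\mathbb R[x_1,\dots,x_n]$ have degree $d$ and satisfy $p(x)=1$ whenever $\sum_{j=1}^n x_j=1$. Then $p$ has at least $n$ distinct monomials of degree $d$ (with nonzero coefficients). *)

From mathcomp Require Import all_boot all_order all_algebra.
From mathcomp Require Import reals.
From mathcomp Require Import mpoly.
Set Implicit Arguments. Unset Strict Implicit. Unset Printing Implicit Defensive.
Import Order.TTheory GRing.Theory Num.Theory.
Local Open Scope ring_scope.

Definition top_monomials (R : realType) (n : nat) (p : {mpoly R[n]}) (d : nat)
  : seq 'X_{1..n} :=
  [seq m <- msupp p | mdeg m == d].

From mathcomp Require Import all_boot all_order all_algebra.
From mathcomp Require Import reals.
From mathcomp Require Import mpoly.
From mathcomp Require Import zify.
Set Implicit Arguments. Unset Strict Implicit. Unset Printing Implicit Defensive.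
Import Order.TTheory GRing.Theory Num.Theory.
Local Open Scope ring_scope.

(* Let q be the homogeneous component of degree d of p.  On every line
   a + t v inside the hyperplane sum x = 1 the polynomial p is constant, and
   the coefficient of t^d in p (a + t v) is q v; hence q vanishes on the
   hyperplane sum x = 0.
   For each variable x_j pick a monomial mu_j of q with maximal x_j-exponent.
   If mu_j = mu_k = mu for j <> k, restrict q to the lines a + t (e_j - e_k)
   with sum a = 0: by maximality, the coefficient of t^(mu_j + mu_k) is, up to
   the sign (-1)^(mu_k), the polynomial collecting the monomials of q with the
   x_j- and x_k-exponents of mu, with x_j and x_k erased.  It vanishes for
   every a, hence identically, although its coefficient at mu is q_mu <> 0.
   So j |-> mu_j is injective and q has at least n monomials. *)

Lemma exists_argmax_seq (T : eqType) (s : seq T) (f : T -> nat) : s != [::] ->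
  exists2 x, x \in s & {in s, forall y, f y <= f x}%N.
Proof.
elim: s => // x s IH _; have [->|/IH [y y_s y_max]] := eqVneq s [::].
  by exists x; rewrite ?mem_seq1 // => y; rewrite mem_seq1 => /eqP->.
have [fxy|fyx] := leqP (f x) (f y).
  by exists y; rewrite ?inE ?y_s ?orbT // => z; rewrite inE => /orP[/eqP->|/y_max].
exists x; rewrite ?inE ?eqxx // => z; rewrite inE => /orP[/eqP->//|/y_max].
by move/leq_trans; apply; apply: ltnW.
Qed.

Section TopCoefficient.
Variable R : nzRingType.

Lemma coefM_top (f g : {poly R}) a b :
  (size f <= a.+1)%N -> (size g <= b.+1)%N ->
  (size (f * g)%R <= (a + b).+1)%N /\ (f * g)`_(a + b) = f`_a * g`_b.
Proof.
move=> sf sg; split; first by apply: leq_trans (size_polyMleq _ _) _; lia.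
move/leq_sizeP: sf => hf; move/leq_sizeP: sg => hg.
have a_lt : (a < (a + b).+1)%N by rewrite ltnS leq_addr.
rewrite coefM (bigD1 (Ordinal a_lt)) //= addKn big1 ?addr0 // => i /eqP i_ne_a.
have [i_lt|i_gt|i_eq] := ltngtP i a.
- by rewrite hg ?mulr0 //; lia.
- by rewrite hf ?mul0r //; apply: ltnW.
- by case: i_ne_a; apply: val_inj.
Qed.

Lemma coef_prod_top (I : Type) (r : seq I) (F : I -> {poly R}) (k : I -> nat) :
  (forall i, size (F i) <= (k i).+1)%N ->
  (size (\prod_(i <- r) F i)%R <= (\sum_(i <- r) k i).+1)%N /\
  (\prod_(i <- r) F i)`_(\sum_(i <- r) k i) = \prod_(i <- r) (F i)`_(k i).
Proof.
move=> sF; elim: r => [|i r [size_r coef_r]]; first by rewrite !big_nil size_poly1 coef1.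
rewrite !big_cons; have [size_ir coef_ir] := coefM_top (sF i) size_r.
by rewrite coef_ir coef_r.
Qed.

Lemma coef_exp_top (f : {poly R}) k : (size f <= 2)%N ->
  (size (f ^+ k) <= k.+1)%N /\ (f ^+ k)`_k = f`_1 ^+ k.
Proof.
move=> sf; elim: k => [|k [size_k coef_k]]; first by rewrite !expr0 size_poly1 coef1.
have [size_Sk coef_Sk] := coefM_top sf size_k.
rewrite exprS; split => //.
by rewrite [in LHS](_ : k.+1 = 1 + k)%N // coef_Sk coef_k -exprS.
Qed.

End TopCoefficient.

Lemma poly_fun_const (R : numDomainType) (P : {poly R}) c :
  (forall t, P.[t] = c) -> P = c%:P.
Proof.
move=> Pc; apply/eqP; rewrite -subr_eq0; apply/eqP.
apply: (@roots_geq_poly_eq0 _ _ [seq i%:R | i <- iota 0 (size (P - c%:P))]).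
- by apply/allP => x _; rewrite /root hornerD hornerN hornerC Pc subrr.
- by rewrite map_inj_uniq ?iota_uniq // => i j /eqP; rewrite eqr_nat => /eqP.
- by rewrite size_map size_iota.
Qed.

Section Slices.
Variables (R : numDomainType) (n : nat).
Implicit Types (p q : {mpoly R[n]}) (m mu : 'X_{1..n}) (B : pred 'I_n).

Lemma sum_delta (j : 'I_n) : \sum_(i < n) (i == j)%:R = 1 :> R.
Proof. by rewrite (bigD1 j) //= eqxx big1 ?addr0 // => i /negbTE ->. Qed.

Definition mdeg_on B m : nat := (\sum_(i < n | B i) m i)%N.

Definition mnm_erase B m : 'X_{1..n} := [multinom if B i then 0%N else m i | i < n].

Definition line_poly p (a b : 'I_n -> R) : {poly R} :=
  \sum_(m <- msupp p) p@_m *: \prod_(i < n) ((a i)%:P + b i *: 'X) ^+ m i.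

Definition mslice p B (b : 'I_n -> R) D : {mpoly R[n]} :=
  \sum_(m <- msupp p | mdeg_on B m == D)
     (p@_m * \prod_(i < n | B i) b i ^+ m i) *: 'X_[mnm_erase B m].

Lemma horner_line_poly p a b t : (line_poly p a b).[t] = p.@[fun i => a i + t * b i].
Proof.
rewrite mevalE horner_sum; apply: eq_bigr => m _.
rewrite hornerZ horner_prod; congr (_ * _); apply: eq_bigr => i _.
by rewrite horner_exp hornerD hornerC hornerZ hornerX mulrC.
Qed.

Lemma meval_mslice p B b D x :
  (mslice p B b D).@[x] = \sum_(m <- msupp p | mdeg_on B m == D)
     p@_m * \prod_(i < n | B i) b i ^+ m i * \prod_(i < n | ~~ B i) x i ^+ m i.
Proof.
rewrite raddf_sum; apply: eq_bigr => m _ /=; rewrite mevalZ mevalX; congr (_ * _).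
rewrite [RHS]big_mkcond; apply: eq_bigr => i _; rewrite mnmE.
by case: (B i).
Qed.

Lemma meval_mslice_off p B b D x y : (forall i, ~~ B i -> x i = y i) ->
  (mslice p B b D).@[x] = (mslice p B b D).@[y].
Proof.
move=> xy; rewrite !meval_mslice; apply: eq_bigr => m _; congr (_ * _).
by apply: eq_bigr => i /xy ->.
Qed.

Lemma coef_line_poly p B a b D :
  (forall i, ~~ B i -> b i = 0) -> {in msupp p, forall m, mdeg_on B m <= D}%N ->
  (line_poly p a b)`_D = (mslice p B b D).@[a].
Proof.
move=> b_off D_max; rewrite meval_mslice coef_sum [RHS]big_mkcond /= !big_seq.
apply: eq_bigr => m m_p; rewrite coefZ.
pose k i := if B i then m i else 0%N.
have factor_top i : (size (((a i)%:P + b i *: 'X) ^+ m i)%R <= (k i).+1)%N /\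
    (((a i)%:P + b i *: 'X) ^+ m i)`_(k i) = if B i then b i ^+ m i else a i ^+ m i.
  rewrite /k; case: ifP => Bi; last first.
    rewrite b_off ?Bi // scale0r addr0 -polyC_exp coefC.
    by split; first exact: size_polyC_leq1.
  have size_affine : (size ((a i)%:P + b i *: 'X)%R <= 2)%N.
    rewrite (leq_trans (size_polyD _ _)) // geq_max (leq_trans (size_polyC_leq1 _)) //.
    by rewrite (leq_trans (size_scale_leq _ _)) ?size_polyX.
  have [size_pow coef_pow] := coef_exp_top (m i) size_affine.
  by rewrite coef_pow coefD coefC coefZ coefX add0r mulr1.
have [size_m coef_m] := coef_prod_top (index_enum 'I_n) (fun i => (factor_top i).1).
have sum_k : (\sum_(i <- index_enum 'I_n) k i)%N = mdeg_on B m.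
  by rewrite /mdeg_on [RHS]big_mkcond.
rewrite sum_k in size_m coef_m.
have [<-|ne] := eqVneq (mdeg_on B m) D.
  rewrite coef_m -mulrA (bigID B) /=; congr (_ * (_ * _)); apply: eq_bigr => i.
    by move=> Bi; rewrite (factor_top i).2 Bi.
  by move=> /negbTE nBi; rewrite (factor_top i).2 nBi.
have lt : (mdeg_on B m < D)%N by rewrite ltn_neqAle ne D_max.
by move/leq_sizeP: size_m => ->; rewrite ?mulr0.
Qed.

Lemma msupp_mslice p B b D m : m \in msupp (mslice p B b D) ->
  exists2 m', m' \in msupp p & m = mnm_erase B m'.
Proof.
move=> /msupp_sum_le /flattenP [s /mapP [m' m'_p ->]] /msuppZ_le.
by rewrite msuppX mem_seq1 => /eqP ->; exists m'; move: m'_p; rewrite mem_filter => /andP[].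
Qed.

Lemma mcoeff_mslice p B b D mu : mu \in msupp p -> mdeg_on B mu = D ->
  {in msupp p, forall m, mdeg_on B m = D -> forall i, B i -> m i = mu i} ->
  (mslice p B b D)@_(mnm_erase B mu) = p@_mu * \prod_(i < n | B i) b i ^+ mu i.
Proof.
move=> mu_p mu_D agree; rewrite raddf_sum /= (big_rem mu) //= mu_D eqxx.
rewrite mcoeffZ mcoeffX eqxx mulr1 [X in _ + X]big1_seq ?addr0 // => m /andP[/eqP m_D m_rem].
rewrite mcoeffZ mcoeffX; have [erase_eq|] := eqVneq; last by rewrite mulr0.
have m_p : m \in msupp p by apply: mem_rem m_rem.
suff m_mu : m = mu by move: m_rem; rewrite m_mu mem_rem_uniqF ?msupp_uniq.
apply/mnmP => i; have := congr1 (fun m' : 'X_{1..n} => m' i) erase_eq.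
by rewrite /= !mnmE; case: ifP => [/(agree _ m_p m_D)|].
Qed.

Lemma mpoly_eq0_meval p : (forall x, p.@[x] = 0) -> p = 0.
Proof.
suff vars_lt k q : {in msupp q, forall m (i : 'I_n), (k <= i)%N -> m i = 0%N} ->
    (forall x, q.@[x] = 0) -> q = 0.
  by apply: (vars_lt n) => m _ i; have := ltn_ord i; lia.
elim: k q => [|k IHk] q q_vars q0.
  have q_const : q = (q@_0%MM)%:MP.
    apply/mpolyP => m; rewrite mcoeffC; have [->|m_ne0] := eqVneq m 0%MM.
      by rewrite mulr1.
    rewrite mulr0 memN_msupp_eq0 //; apply: contra m_ne0 => m_q.
    by apply/eqP/mnmP => i; rewrite mnm0E; apply: q_vars.
  by rewrite q_const; have := q0 (fun _ => 0); rewrite {1}q_const mevalC => ->.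
have [le_n_k|lt_k_n] := leqP n k.
  by apply: IHk q0 => m _ i le_k_i; have := ltn_ord i; lia.
pose i0 := Ordinal lt_k_n; pose B := pred1 i0.
have [//|q_nz] := eqVneq q 0; exfalso.
have [mu mu_q mu_max] : exists2 mu, mu \in msupp q & {in msupp q, forall m, m i0 <= mu i0}%N.
  by apply: exists_argmax_seq; rewrite msupp_eq0.
pose b i : R := (i == i0)%:R; pose D := mu i0.
have deg_on m : mdeg_on B m = m i0 by rewrite /mdeg_on big_pred1_eq.
(* Slicing off the top power of [x_i0] leaves a polynomial in the variables
   below [k] that still vanishes everywhere. *)
have slice0 : mslice q B b D = 0.
  apply: IHk => [m /msupp_mslice [m' m'_q ->] i le_k_i | x].
    rewrite mnmE /=; have [//|i_ne] := eqVneq i i0.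
    apply: (q_vars _ m'_q); suff : (i : nat) != k by lia.
    by apply: contra_neq i_ne => i_k; apply: val_inj.
  rewrite -coef_line_poly => [||m m_q]; last by rewrite deg_on mu_max.
    have -> : line_poly q x b = 0%:P.
      by apply: poly_fun_const => t; rewrite horner_line_poly q0.
    by rewrite coefC if_same.
  by move=> i /negbTE; rewrite /b /= => ->.
have := congr1 (mcoeff (mnm_erase B mu)) slice0.
rewrite mcoeff0 mcoeff_mslice ?deg_on //; last by move=> m _; rewrite deg_on => m_D i /eqP ->.
by rewrite big_pred1_eq /b eqxx expr1n mulr1 => /eqP; rewrite mcoeff_eq0 mu_q.
Qed.

End Slices.

Section Hyperplane.
Variables (R : numDomainType) (n : nat).
Implicit Types (p q : {mpoly R[n]}) (m mu : 'X_{1..n}).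

Lemma mcoeff_pihomog p d m :
  (pihomog mdeg d p)@_m = if mdeg m == d then p@_m else 0.
Proof.
rewrite pihomogE raddf_sum /=; case: eqP => [<-|ne].
  rewrite [p in RHS]mpolyE raddf_sum big_mkcond /=; apply: eq_bigr => m' _.
  by rewrite mcoeffZ mcoeffX; case: (eqVneq m' m) => [->|_]; rewrite ?eqxx ?mulr0 ?if_same.
rewrite big1 // => m' /eqP deg_m'; rewrite mcoeffZ mcoeffX.
by case: (eqVneq m' m) => [m'_m|]; [case: ne; rewrite -m'_m | rewrite mulr0].
Qed.

Lemma mdeg_on_predT m : mdeg_on predT m = mdeg m.
Proof. by rewrite mdegE. Qed.

Lemma pihomog_vanish_sum0 p d c (j : 'I_n) :
  (0 < d)%N -> (msize p <= d.+1)%N ->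
  (forall x : 'I_n -> R, \sum_(i < n) x i = 1 -> p.@[x] = c) ->
  forall v, \sum_(i < n) v i = 0 -> (pihomog mdeg d p).@[v] = 0.
Proof.
move=> d_gt0 size_p p_c v v0; pose e i : R := (i == j)%:R.
have line_c : line_poly p e v = c%:P.
  apply: poly_fun_const => t; rewrite horner_line_poly p_c //.
  by rewrite big_split /= -mulr_sumr v0 mulr0 addr0 sum_delta.
have top : (line_poly p e v)`_d = (mslice p predT v d).@[e].
  apply: coef_line_poly => // m /msize_mdeg_lt /leq_trans /(_ size_p).
  by rewrite mdeg_on_predT.
move: top; rewrite line_c coefC gtn_eqF // meval_mslice => top.
rewrite [RHS]top pihomogE raddf_sum; apply: eq_big => [m|m _]; first by rewrite mdeg_on_predT.
by rewrite /= mevalZ mevalX big_pred0_eq mulr1.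
Qed.

Lemma no_joint_argmax q (j k : 'I_n) mu : j != k ->
  (forall v, \sum_(i < n) v i = 0 -> q.@[v] = 0) -> mu \in msupp q ->
  {in msupp q, forall m, m j <= mu j}%N -> {in msupp q, forall m, m k <= mu k}%N ->
  False.
Proof.
move=> j_ne_k q_van mu_q max_j max_k.
pose B := [pred i : 'I_n | (i == j) || (i == k)].
pose b i : R := (i == j)%:R - (i == k)%:R; pose D := (mu j + mu k)%N.
have deg_on m : mdeg_on B m = (m j + m k)%N.
  rewrite /mdeg_on (bigD1 j) ?inE ?eqxx // (bigD1 k) /= ?eqxx ?orbT 1?eq_sym //.
  by rewrite big1 ?addn0 // => i /andP[/andP[/orP[] ->]]; rewrite ?eqxx.
have agree : {in msupp q, forall m, mdeg_on B m = D -> forall i, B i -> m i = mu i}.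
  move=> m m_q; rewrite deg_on /D => m_D i /orP[] /eqP ->;
  by have := max_j m m_q; have := max_k m m_q; lia.
have slice0 : mslice q B b D = 0.
  (* [a] agrees with [w] off [B], and both [a] and [b] lie on the hyperplane. *)
  apply: mpoly_eq0_meval => w; pose a i := w i - (i == j)%:R * \sum_(l < n) w l.
  rewrite (@meval_mslice_off _ _ q B b D w a) => [|i]; last first.
    by rewrite inE negb_or /a => /andP[/negbTE -> _]; rewrite mul0r subr0.
  rewrite -coef_line_poly => [||m m_q]; last by rewrite deg_on leq_add ?max_j ?max_k.
    have -> : line_poly q a b = 0%:P.
      apply: poly_fun_const => t; rewrite horner_line_poly q_van //.
      rewrite big_split /= -mulr_sumr !sumrB -mulr_suml !sum_delta.
      by rewrite mul1r !subrr mulr0 addr0.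
    by rewrite coefC if_same.
  by move=> i; rewrite inE negb_or /b => /andP[/negbTE -> /negbTE ->]; rewrite subrr.
have := congr1 (mcoeff (mnm_erase B mu)) slice0.
rewrite mcoeff0 mcoeff_mslice ?deg_on //; apply/eqP; rewrite mulf_neq0 -?mcoeff_msupp //.
apply/prodf_neq0 => i /orP[] /eqP ->; rewrite expf_neq0 // /b eqxx.
  by rewrite (negbTE j_ne_k) subr0 oner_neq0.
by rewrite (eq_sym k) (negbTE j_ne_k) sub0r oppr_eq0 oner_neq0.
Qed.

Lemma size_msupp_vanish_sum0 q : q != 0 ->
  (forall v, \sum_(i < n) v i = 0 -> q.@[v] = 0) -> (n <= size (msupp q))%N.
Proof.
move=> q_nz q_van; have supp_nz : msupp q != [::] by rewrite msupp_eq0.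
have [mu mu_q mu_max] := fin_all_exists2 (fun j : 'I_n =>
  exists_argmax_seq (fun m : 'X_{1..n} => m j) supp_nz).
have mu_inj : injective mu.
  move=> j k mu_jk; apply/eqP/negPn/negP => j_ne_k.
  by apply: (no_joint_argmax j_ne_k q_van (mu_q j) (mu_max j)); rewrite mu_jk; apply: mu_max.
rewrite -[n in (n <= _)%N]size_enum_ord -(size_map mu).
apply: uniq_leq_size; first by rewrite map_inj_uniq ?enum_uniq.
by move=> _ /mapP [j _ ->].
Qed.

End Hyperplane.

Theorem corollary1 (R : realType) (n d : nat) (p : {mpoly R[n]}) :
  (0 < d)%N ->
  msize p = d.+1 ->
  (forall x : 'I_n -> R, \sum_(j < n) x j = 1 -> p.@[x] = 1) ->
  (n <= size (top_monomials p d))%N.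
Proof.
move=> d_gt0 size_p p_hyp; have [n_eq0|n_gt0] := posnP n; first by rewrite {1}n_eq0.
set q := pihomog mdeg d p.
have q_van := pihomog_vanish_sum0 (Ordinal n_gt0) d_gt0 (eq_leq size_p) p_hyp.
have p_nz : p != 0 by rewrite -msize_poly_eq0 size_p.
have deg_lead : mdeg (mlead p) = d by apply: succn_inj; rewrite mlead_deg.
have q_nz : q != 0.
  apply: contraNneq p_nz => /(congr1 (mcoeff (mlead p))).
  by rewrite mcoeff_pihomog deg_lead eqxx mcoeff0 => /eqP; rewrite mleadc_eq0.
apply: leq_trans (size_msupp_vanish_sum0 q_nz q_van) _.
apply: uniq_leq_size (msupp_uniq q) _ => m; rewrite mem_filter !mcoeff_msupp.
by rewrite mcoeff_pihomog; case: (mdeg m == d); rewrite ?eqxx.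
Qed.
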